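(* Let $A=\sigma(R)\langle x_1,\dots,x_n\rangle$ be a bijective skew PBW extension over a ring $R$, with associated endomorphisms $\sigma_i$ and $\sigma_i$-derivations $\delta_i$. Then the opposite ring $A^{\mathrm{op}}$ is a bijective skew PBW extension over $R^{\mathrm{op}}$. Moreover, for $A^{\mathrm{op}}$ the associated automorphisms are $\sigma_i^{\mathrm{op}}:R^{\mathrm{op}}\to R^{\mathrm{op}}$, $\sigma_i^{\mathrm{op}}(r)=\sigma_i^{-1}(r)$, and the associated $\sigma_i^{\mathrm{op}}$-derivations are $\delta_i^{\mathrm{op}}:R^{\mathrm{op}}\to R^{\mathrm{op}}$, $\delta_i^{\mathrm{op}}(r)=-\delta_i(\sigma_i^{-1}(r))$, for $r\in R^{\mathrm{op}}$, $1\le i\le n$.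
   Context: Rings are associative with unity, not necessarily commutative. Given rings $R\subseteq A$, $A$ is a skew PBW extension over $R$, written $A=\sigma(R)\langle x_1,\dots,x_n\rangle$, if: (i) $R\subseteq A$; (ii) there are elements $x_1,\dots,x_n\in A$ such that $A$ is a free left $R$-module with basis $\mathrm{Mon}(A)=\{x_1^{\alpha_1}\cdots x_n^{\alpha_n}\mid (\alpha_1,\dots,\alpha_n)\in\mathbb{N}^n\}$; (iii) for each $1\le i\le n$ and each $r\in R\setminus\{0\}$ there is $c_{i,r}\in R\setminus\{0\}$ with $x_ir-c_{i,r}x_i\in R$; (iv) for all $1\le i,j\le n$ there is $c_{i,j}\in R\setminus\{0\}$ with $x_jx_i-c_{i,j}x_ix_j\in R+Rx_1+\cdots+Rx_n$. For such $A$, for each $i$ there exist an injective ring endomorphism $\sigma_i$ of $R$ and a $\sigma_i$-derivation $\delta_i$ of $R$ (i.e. additive with $\delta_i(rs)=\sigma_i(r)\delta_i(s)+\delta_i(r)s$) such that $x_ir=\sigma_i(r)x_i+\delta_i(r)$ for all $r\in R$. $A$ is called bijective if every $\sigma_i$ is bijective and the elements $c_{i,j}$ are invertible for $1\le i<j\le n$. The opposite ring $B^{\mathrm{op}}$ of $B$ has the same additive group and product $a*b=ba$. *)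

From HB Require Import structures.
From mathcomp Require Import all_boot all_order all_algebra.
Set Implicit Arguments. Unset Strict Implicit. Unset Printing Implicit Defensive.
Import GRing.Theory.
Local Open Scope ring_scope.

(* The base ring R is modelled as a subring S (a predicate closed under
   1, subtraction and multiplication) of the (possibly noncommutative)
   ring A.  The opposite ring of A is MathComp's converse ring A^c, and
   R^op is then the same predicate S viewed inside A^c. *)

Section SkewPBW.
Variables (A : nzRingType) (S : pred A) (n : nat) (x : 'I_n -> A).

Definition monom (a : n.-tuple nat) : A := \prod_(i < n) x i ^+ (tnth a i).

Definition mon_spans : Prop :=
  forall a : A, exists (s : seq (n.-tuple nat)) (c : n.-tuple nat -> A),
    (forall al, c al \in S) /\ a = \sum_(al <- s) c al * monom al.

Definition mon_free : Prop :=
  forall (s : seq (n.-tuple nat)) (c : n.-tuple nat -> A),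
    uniq s -> (forall al, c al \in S) ->
    \sum_(al <- s) c al * monom al = 0 ->
    forall al, al \in s -> c al = 0.

Definition in_lin (a : A) : Prop :=
  exists (r0 : A) (r : 'I_n -> A),
    r0 \in S /\ (forall k, r k \in S) /\ a = r0 + \sum_(k < n) r k * x k.

Definition skewPBW : Prop :=
  [/\ subring_closed S,
      mon_spans, mon_free,
      (forall (i : 'I_n) (r : A), r \in S -> r != 0 ->
          exists c, [/\ c \in S, c != 0 & x i * r - c * x i \in S])
    & (forall i j : 'I_n,
          exists c, [/\ c \in S, c != 0 & in_lin (x j * x i - c * x i * x j)])].

(* sigma, delta (maps A -> A, only their values on S matter) are the
   endomorphism and sigma-derivation associated to x_i:
   x_i r = sigma(r) x_i + delta(r) for all r in R. *)
Definition assoc_maps (i : 'I_n) (sigma delta : A -> A) : Prop :=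
  forall r, r \in S -> [/\ sigma r \in S, delta r \in S &
                           x i * r = sigma r * x i + delta r].

Definition bijective_on_S (sigma : A -> A) : Prop :=
  {in S &, injective sigma} /\ (forall s, s \in S -> exists2 r, r \in S & sigma r = s).

Definition unit_in_S (c : A) : Prop :=
  exists2 d, d \in S & c * d = 1 /\ d * c = 1.

Definition bijective_skewPBW : Prop :=
  [/\ skewPBW,
      (forall i : 'I_n, exists sigma delta,
          assoc_maps i sigma delta /\ bijective_on_S sigma)
    & (forall i j : 'I_n, (i < j)%N ->
          exists c, [/\ c \in S, unit_in_S c & in_lin (x j * x i - c * x i * x j)])].

End SkewPBW.

From HB Require Import structures.
From mathcomp Require Import all_boot all_order all_algebra.
From Stdlib Require Import IndefiniteDescription.
Set Implicit Arguments. Unset Strict Implicit. Unset Printing Implicit Defensive.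
Import GRing.Theory.
Local Open Scope ring_scope.

(* Filter A by total degree in the x_i.  As every sigma_i is bijective and the
   c_{i,j} with i < j are units, the commutation rules show that a word in the
   x_i equals u x^alpha modulo lower degree, with u a unit and x^alpha the
   standard monomial of the same multidegree, and that x^alpha r = r' x^alpha
   modulo lower degree, where r |-> r' is onto R and r' = 0 only for r = 0.
   Hence the reversed monomials x_n^{a_n} ... x_1^{a_1} with coefficients on the
   right have the same leading terms as the standard monomials with coefficients
   on the left, and induction on the degree shows that they form a basis of A as
   a right R-module, i.e. Mon(A^op) is a basis of A^op over R^op.  The
   relations of A^op come from
   x_i sigma_i^{-1}(r) = r x_i + delta_i(sigma_i^{-1}(r)). *)

Lemma sum_partition_undup (I K : eqType) (V : nmodType) (s : seq I) (k : I -> K)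
    (F : I -> V) :
  \sum_(i <- s) F i = \sum_(j <- undup (map k s)) \sum_(i <- s | k i == j) F i.
Proof.
rewrite (exchange_big_dep predT) //= big_seq [RHS]big_seq; apply: eq_bigr => i si.
rewrite (eq_bigl (pred1 (k i))) => [|j]; last by rewrite /= eq_sym.
rewrite -big_filter filter_pred1_uniq ?undup_uniq ?mem_undup ?map_f //.
by rewrite big_cons big_nil addr0.
Qed.

Section Words.
Variable n : nat.

Definition ordle : rel 'I_n := fun a b => (a <= b)%N.

Lemma ordle_trans : transitive ordle.
Proof. by move=> a b c; apply: leq_trans. Qed.

Lemma ordle_anti : antisymmetric ordle.
Proof. by move=> a b /anti_leq /val_inj. Qed.

Definition standard (w : seq 'I_n) := sorted ordle w.

Lemma standard_perm_eq s t : standard s -> standard t -> perm_eq s t -> s = t.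
Proof. exact: (sorted_eq ordle_trans ordle_anti). Qed.

Lemma standard_cons j t : standard (j :: t) = all (ordle j) t && standard t.
Proof. by rewrite /standard /= (path_sortedE ordle_trans). Qed.

Definition mon_word (al : n.-tuple nat) : seq 'I_n :=
  flatten [seq nseq (tnth al k) k | k <- index_enum 'I_n].

Definition mon_exp (w : seq 'I_n) : n.-tuple nat := [tuple count_mem k w | k < n].

Lemma count_mon_word al k : count_mem k (mon_word al) = tnth al k.
Proof.
rewrite /mon_word count_flatten sumnE !big_map (bigD1 k) //= count_nseq /= eqxx.
by rewrite mul1n big1 ?addn0 // => j /negbTE; rewrite count_nseq /= eq_sym => ->.
Qed.

Lemma mon_wordK : cancel mon_word mon_exp.
Proof. by move=> al; apply: eq_from_tnth => k; rewrite tnth_mktuple count_mon_word. Qed.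

Lemma mon_word_inj : injective mon_word.
Proof. exact: can_inj mon_wordK. Qed.

Lemma mon_word_standard al : standard (mon_word al).
Proof.
rewrite /standard (sorted_pairwise ordle_trans) /mon_word.
have : sorted ltn (map val (index_enum 'I_n)).
  by rewrite [index_enum _]unlock -enumT val_enum_ord iota_ltn_sorted.
elim: (index_enum 'I_n) => //= k s IH /[dup] /path_sorted /IH {}IH.
rewrite (path_sortedE ltn_trans) => /andP[/allP lt_k _].
rewrite pairwise_cat IH andbT; apply/andP; split.
  apply/allrelP => a b /nseqP[-> _] /flattenP[_ /mapP[j js ->] /nseqP[-> _]].
  exact/ltnW/lt_k/map_f.
by elim: (tnth al k) => //= m ->; rewrite all_nseq /ordle leqnn orbT.
Qed.

Lemma mon_expK w : standard w -> mon_word (mon_exp w) = w.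
Proof.
move=> std_w; apply: standard_perm_eq (mon_word_standard _) std_w _.
by apply/allP => k _; rewrite /= count_mon_word tnth_mktuple.
Qed.

End Words.

Section WordProduct.
Variables (R : nzRingType) (n : nat) (x : 'I_n -> R).

Definition wprod (w : seq 'I_n) : R := \prod_(k <- w) x k.

Lemma wprod_nil : wprod [::] = 1.
Proof. by rewrite /wprod big_nil. Qed.

Lemma wprod_cons i w : wprod (i :: w) = x i * wprod w.
Proof. by rewrite /wprod big_cons. Qed.

Lemma monomE al : monom x al = wprod (mon_word al).
Proof.
rewrite /monom /wprod /mon_word big_flatten /= big_map.
apply: eq_bigr => k _; rewrite big_nseq.
by elim: (tnth al k) => [|m IH] /=; rewrite ?expr0 // exprS IH.
Qed.

Lemma standard_sum_monom (l : seq (R * seq 'I_n)) :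
  all (fun p => standard p.2) l ->
  \sum_(p <- l) p.1 * wprod p.2 =
  \sum_(al <- undup [seq mon_exp p.2 | p <- l])
     (\sum_(p <- l | mon_exp p.2 == al) p.1) * monom x al.
Proof.
move=> std_l; rewrite (sum_partition_undup l (fun p : R * _ => mon_exp p.2)).
apply: eq_bigr => al _; rewrite mulr_suml big_seq_cond [RHS]big_seq_cond.
by apply: eq_bigr => p /andP[pl /eqP <-]; rewrite monomE mon_expK // (allP std_l).
Qed.

End WordProduct.

Lemma wprod_conv (R : nzRingType) n (x : 'I_n -> R) w :
  wprod (x : 'I_n -> R^c) w = wprod x (rev w).
Proof. by rewrite /wprod rev_big_rev. Qed.

Lemma assoc_maps_conv (A : nzRingType) (S : {pred A}) n (x : 'I_n -> A) i
    (sigma delta sigma_inv : A -> A) :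
  oppr_closed S -> assoc_maps S x i sigma delta ->
  (forall r, r \in S -> sigma_inv r \in S /\ sigma (sigma_inv r) = r) ->
  assoc_maps (A := A^c) S x i sigma_inv (fun r => - delta (sigma_inv r)).
Proof.
move=> S_opp x_assoc inv r rS; have [invS invK] := inv r rS.
have [_ dS e] := x_assoc _ invS; split=> //; first exact: S_opp.
change ((r : A) * x i = x i * sigma_inv r - delta (sigma_inv r)).
by rewrite e invK addrK.
Qed.

Section SkewPBW.
Variables (A : nzRingType) (S : {pred A}) (n : nat) (x : 'I_n -> A).
Hypothesis S_subring : subring_closed S.
HB.instance Definition _ := GRing.isSubringClosed.Build A S S_subring.

Definition lcombo (l : seq (A * seq 'I_n)) := \sum_(p <- l) p.1 * wprod x p.2.

Definition deglt d a := exists2 l : seq (A * seq 'I_n),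
  all (fun p => [&& p.1 \in S, standard p.2 & (size p.2 < d)%N]) l & a = lcombo l.

Lemma deglt0 d : deglt d 0.
Proof. by exists [::]; rewrite /lcombo ?big_nil. Qed.

Lemma degltD d a b : deglt d a -> deglt d b -> deglt d (a + b).
Proof.
move=> [l1 ok1 ->] [l2 ok2 ->]; exists (l1 ++ l2); first by rewrite all_cat ok1.
by rewrite /lcombo big_cat.
Qed.

Lemma degltMl d r a : r \in S -> deglt d a -> deglt d (r * a).
Proof.
move=> rS [l ok_l ->]; exists [seq (r * p.1, p.2) | p <- l].
  rewrite all_map; apply/allP => p /(allP ok_l) /and3P[p1S std_p lt_p].
  by rewrite /= rpredM ?std_p.
by rewrite /lcombo big_map mulr_sumr; apply: eq_bigr => p _; rewrite mulrA.
Qed.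

Lemma degltN d a : deglt d a -> deglt d (- a).
Proof. by rewrite -mulN1r; apply: degltMl; rewrite rpredN rpred1. Qed.

Lemma degltB d a b : deglt d a -> deglt d b -> deglt d (a - b).
Proof. by move=> da /degltN; apply: degltD. Qed.

Lemma deglt_sum d (I : eqType) (r : seq I) (F : I -> A) :
  (forall i, i \in r -> deglt d (F i)) -> deglt d (\sum_(i <- r) F i).
Proof.
by move=> dF; rewrite big_seq; apply: big_ind => //; [apply: deglt0 | apply: degltD].
Qed.

Lemma deglt_leq d e a : (d <= e)%N -> deglt d a -> deglt e a.
Proof.
move=> le_de [l ok_l ->]; exists l => //.
apply/allP => p /(allP ok_l) /and3P[-> -> lt_pd].
exact: leq_trans lt_pd le_de.
Qed.

Lemma deglt0_eq0 a : deglt 0 a -> a = 0.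
Proof.
case=> [[|p l] ok_l ->]; first by rewrite /lcombo big_nil.
by case/andP: ok_l => /and3P[_ _].
Qed.

Lemma deglt_monom r w : r \in S -> standard w -> deglt (size w).+1 (r * wprod x w).
Proof.
move=> rS std_w; exists [:: (r, w)]; first by rewrite /= rS std_w ltnSn.
by rewrite /lcombo big_seq1.
Qed.

Hypothesis x_free : mon_free S x.

Lemma lcombo_coef_eq0 l t :
  all (fun p => (p.1 \in S) && standard p.2) l -> lcombo l = 0 -> standard t ->
  \sum_(p <- l | p.2 == t) p.1 = 0.
Proof.
move=> ok_l l0 std_t.
have std_l : all (fun p => standard p.2) l by apply/allP => p /(allP ok_l) /andP[].
pose c al := \sum_(p <- l | mon_exp p.2 == al) p.1.
have cS al : c al \in S.
  by rewrite /c big_seq_cond; apply: rpred_sum => p /andP[/(allP ok_l) /andP[]].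
have := standard_sum_monom x std_l; rewrite -/(lcombo l) l0 => /esym.
move=> /(x_free (undup_uniq _) cS) c0.
have -> : \sum_(p <- l | p.2 == t) p.1 = c (mon_exp t).
  rewrite /c big_seq_cond [RHS]big_seq_cond; apply: eq_bigl => p.
  case pl: (p \in l) => //=; have std_p := allP std_l p pl.
  by apply/eqP/eqP => [-> // | e]; rewrite -(mon_expK std_p) e mon_expK.
have [/c0 // | t_notin] := boolP (mon_exp t \in undup [seq mon_exp p.2 | p <- l]).
rewrite /c big_seq_cond big1 // => p /andP[pl /eqP e]; case/negP: t_notin.
by rewrite mem_undup -e; apply: (map_f (fun p : A * _ => mon_exp p.2)).
Qed.

Lemma mulX_coef_inj i a b a' b' : a \in S -> b \in S -> a' \in S -> b' \in S ->
  a * x i + b = a' * x i + b' -> a = a'.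
Proof.
move=> aS bS a'S b'S e; apply/eqP; rewrite -subr_eq0; apply/eqP.
have := @lcombo_coef_eq0 [:: (a - a', [:: i]); (b - b', [::])] [:: i].
rewrite !big_cons big_nil /= eqxx addr0; apply => //; first by rewrite !rpredB.
rewrite /lcombo !big_cons big_nil /= !wprod_cons !wprod_nil !mulr1 addr0 !mulrBl.
by rewrite addrACA -opprD e subrr.
Qed.

Definition Sunit u := u \in S /\ unit_in_S S u.

Lemma Sunit1 : Sunit 1.
Proof. by split; [rewrite rpred1 | exists 1; rewrite ?rpred1 ?mulr1]. Qed.

Lemma SunitM u v : Sunit u -> Sunit v -> Sunit (u * v).
Proof.
move=> [uS [u' u'S [uu' u'u]]] [vS [v' v'S [vv' v'v]]]; split; first exact: rpredM.
exists (v' * u'); first exact: rpredM.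
by rewrite !mulrA -(mulrA u) vv' -(mulrA v') u'u !mulr1.
Qed.

Variables sigma delta : 'I_n -> A -> A.
Hypothesis x_assoc : forall i, assoc_maps S x i (sigma i) (delta i).

Lemma sigmaS i r : r \in S -> sigma i r \in S.
Proof. by case/(x_assoc i). Qed.

Lemma deltaS i r : r \in S -> delta i r \in S.
Proof. by case/(x_assoc i). Qed.

Lemma mulXr i r : r \in S -> x i * r = sigma i r * x i + delta i r.
Proof. by case/(x_assoc i). Qed.

Lemma sigma0 i : sigma i 0 = 0.
Proof.
symmetry; apply: (@mulX_coef_inj i 0 0 _ (delta i 0));
  rewrite ?sigmaS ?deltaS ?rpred0 //.
by rewrite -mulXr ?rpred0 // mul0r mulr0 addr0.
Qed.

Lemma sigma1 i : sigma i 1 = 1.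
Proof.
symmetry; apply: (@mulX_coef_inj i 1 0 _ (delta i 1));
  rewrite ?sigmaS ?deltaS ?rpred0 ?rpred1 //.
by rewrite -mulXr ?rpred1 // mul1r mulr1 addr0.
Qed.

Lemma sigmaM i r s : r \in S -> s \in S -> sigma i (r * s) = sigma i r * sigma i s.
Proof.
move=> rS sS; symmetry.
apply: (@mulX_coef_inj i _ (sigma i r * delta i s + delta i r * s) _ (delta i (r * s))).
- by rewrite rpredM ?sigmaS.
- by rewrite rpredD ?rpredM ?sigmaS ?deltaS.
- by rewrite sigmaS ?rpredM.
- by rewrite deltaS ?rpredM.
rewrite -mulrA addrA -mulrDr -(mulXr i sS) mulrA -mulrDl -(mulXr i rS) -mulrA.
by rewrite -mulXr ?rpredM.
Qed.

Lemma Sunit_sigma i u : Sunit u -> Sunit (sigma i u).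
Proof.
move=> [uS [u' u'S [uu' u'u]]]; split; first exact: sigmaS.
by exists (sigma i u'); rewrite ?sigmaS // -!sigmaM // uu' u'u sigma1.
Qed.

Hypothesis x_comm_unit : forall i j : 'I_n, (i < j)%N ->
  exists c, [/\ c \in S, unit_in_S S c & in_lin S x (x j * x i - c * x i * x j)].

Definition mulX_lead s := forall i, exists t u, [/\ standard t, perm_eq t (i :: s),
  Sunit u & deglt (size s).+1 (x i * wprod x s - u * wprod x t)].

Lemma deglt_mulX_lead s i : standard s -> mulX_lead s ->
  deglt (size s).+2 (x i * wprod x s).
Proof.
move=> std_s /(_ i) [t [u [std_t pt [uS _] d_s]]].
rewrite -(subrK (u * wprod x t) (x i * wprod x s)); apply: degltD.
  exact: deglt_leq (leqnSn _) d_s.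
by have := deglt_monom uS std_t; rewrite (perm_size pt).
Qed.

Lemma degltXl_of_lead d : (forall s, standard s -> (size s < d)%N -> mulX_lead s) ->
  forall i a, deglt d a -> deglt d.+1 (x i * a).
Proof.
move=> lead_d i a [l ok_l ->]; rewrite /lcombo mulr_sumr; apply: deglt_sum => p pl.
have /and3P[pS std_p lt_pd] := allP ok_l p pl.
rewrite mulrA mulXr // mulrDl; apply: degltD.
  rewrite -mulrA; apply: degltMl; first exact: sigmaS.
  by apply: (deglt_leq _ (deglt_mulX_lead i std_p (lead_d _ std_p lt_pd))).
by apply: (deglt_leq _ (deglt_monom (deltaS i pS) std_p)); rewrite ltnS ltnW.
Qed.

Lemma deglt_lin_wprod l s : in_lin S x l -> standard s -> mulX_lead s ->
  deglt (size s).+2 (l * wprod x s).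
Proof.
move=> [r0 [r [r0S [rS ->]]]] std_s lead_s; rewrite mulrDl mulr_suml; apply: degltD.
  exact: deglt_leq (leqnSn _) (deglt_monom r0S std_s).
apply: deglt_sum => k _; rewrite -mulrA.
by apply: degltMl => //; apply: deglt_mulX_lead.
Qed.

Lemma mulX_lead_nil : mulX_lead [::].
Proof.
move=> i; exists [:: i], 1; split => //; first exact: Sunit1.
by rewrite wprod_cons mul1r subrr; apply: deglt0.
Qed.

Lemma mulX_lead_cons j s : standard (j :: s) ->
  (forall t, standard t -> (size t <= size s)%N -> mulX_lead t) -> mulX_lead (j :: s).
Proof.
move=> std_js lead_le i; have std_s : standard s := path_sorted std_js.
have [le_ij | lt_ji] := leqP i j.
  exists (i :: j :: s), 1; split; [by apply/andP | exact: perm_refl | exact: Sunit1 |].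
  by rewrite mul1r [wprod x (i :: _)]wprod_cons subrr; apply: deglt0.
have [c [cS cU lin_c]] := x_comm_unit lt_ji.
have lead_s := lead_le s std_s (leqnn _).
have [t [u [std_t pt [uS uU] d_s]]] := lead_s i.
exists (j :: t), (c * sigma j u); split.
- rewrite standard_cons std_t andbT (perm_all _ pt) /=.
  move: std_js; rewrite standard_cons => /andP[-> _].
  by rewrite andbT /ordle ltnW.
- apply: (@perm_trans _ (j :: i :: s)); first by rewrite perm_cons.
  by apply/permP => a /=; rewrite addnCA.
- exact: SunitM (conj cS cU) (Sunit_sigma j (conj uS uU)).
set l := x i * x j - c * x j * x i.
set D := x i * wprod x s - u * wprod x t.
have e_ij : x i * x j = l + c * x j * x i by rewrite subrK.
have e_s : x i * wprod x s = D + u * wprod x t by rewrite subrK.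
have -> : x i * wprod x (j :: s) = l * wprod x s + c * (x j * D)
    + c * delta j u * wprod x t + c * sigma j u * wprod x (j :: t).
  rewrite wprod_cons mulrA e_ij mulrDl.
  rewrite -[c * x j * x i * _]mulrA -[c * x j * _]mulrA e_s.
  rewrite mulrDr mulrDr -addrA -addrA; congr (_ + (_ + _)).
  rewrite (mulrA (x j)) mulXr // mulrDl mulrDr addrC; congr (_ + _).
    by rewrite wprod_cons !mulrA.
  by rewrite !mulrA.
rewrite addrK; apply: degltD; first apply: degltD.
- exact: deglt_lin_wprod.
- apply: degltMl => //; apply: (degltXl_of_lead _ j d_s) => s' std_s' lt_s's.
  exact: lead_le.
- by have := deglt_monom (rpredM cS (deltaS j uS)) std_t; rewrite (perm_size pt).
Qed.

Lemma mulX_leadP s : standard s -> mulX_lead s.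
Proof.
have [m] := ubnP (size s); elim: m s => // m IH [_ _ | j s /= lt_sm std_js].
  exact: mulX_lead_nil.
apply: mulX_lead_cons => // t std_t le_ts; apply: IH std_t.
exact: leq_ltn_trans le_ts lt_sm.
Qed.

Lemma degltXl d i a : deglt d a -> deglt d.+1 (x i * a).
Proof. by apply: degltXl_of_lead => s std_s _; apply: mulX_leadP. Qed.

Lemma wprod_lead w : exists t u, [/\ standard t, perm_eq t w, Sunit u
  & deglt (size w) (wprod x w - u * wprod x t)].
Proof.
elim: w => [|i w [t [u [std_t pt [uS uU] d_w]]]].
  exists [::], 1; split => //; first exact: Sunit1.
  by rewrite mul1r subrr; apply: deglt0.
have [t' [v [std_t' pt' vU d_t]]] := mulX_leadP std_t i.
exists t', (sigma i u * v); split => //.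
- by apply: perm_trans pt' _; rewrite perm_cons.
- exact: SunitM (Sunit_sigma i (conj uS uU)) vU.
set b := wprod x w - u * wprod x t.
set D := x i * wprod x t - v * wprod x t'.
rewrite wprod_cons; have -> : x i * wprod x w =
    x i * b + sigma i u * D + delta i u * wprod x t + sigma i u * v * wprod x t'.
  rewrite -{1}(subrK (u * wprod x t) (wprod x w)) -/b mulrDr -!addrA; congr (_ + _).
  rewrite mulrA mulXr // mulrDl [delta i u * _ + _]addrC addrA; congr (_ + _).
  by rewrite -mulrA -(subrK (v * wprod x t') (x i * wprod x t)) -/D mulrDr mulrA.
rewrite addrK; apply: degltD; first apply: degltD.
- exact: degltXl.
- by apply: degltMl; [exact: sigmaS | rewrite /= -(perm_size pt)].
- by have := deglt_monom (deltaS i uS) std_t; rewrite (perm_size pt).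
Qed.

Lemma deglt_wprod w : deglt (size w).+1 (wprod x w).
Proof.
have [t [u [std_t pt [uS _] d_w]]] := wprod_lead w.
rewrite -(subrK (u * wprod x t) (wprod x w)); apply: degltD; first exact: deglt_leq d_w.
by have := deglt_monom uS std_t; rewrite (perm_size pt).
Qed.

Variable sigma_inv : 'I_n -> A -> A.
Hypothesis sigma_inj : forall i, {in S &, injective (sigma i)}.
Hypothesis sigma_invP :
  forall i r, r \in S -> sigma_inv i r \in S /\ sigma i (sigma_inv i r) = r.

Lemma sigma_invS i r : r \in S -> sigma_inv i r \in S.
Proof. by move=> rS; case: (sigma_invP i rS). Qed.

Lemma sigma_invK i r : r \in S -> sigma i (sigma_inv i r) = r.
Proof. by move=> rS; case: (sigma_invP i rS). Qed.

Lemma sigmaK i r : r \in S -> sigma_inv i (sigma i r) = r.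
Proof.
move=> rS; apply: (@sigma_inj i _ _ (sigma_invS i (sigmaS i rS)) rS).
by rewrite sigma_invK ?sigmaS.
Qed.

Lemma sigma_invM i r s : r \in S -> s \in S ->
  sigma_inv i (r * s) = sigma_inv i r * sigma_inv i s.
Proof.
move=> rS sS; have invS := sigma_invS i.
apply: (@sigma_inj i _ _ (invS _ (rpredM rS sS)) (rpredM (invS _ rS) (invS _ sS))).
by rewrite sigmaM ?sigma_invS // !sigma_invK ?rpredM.
Qed.

Lemma sigma_inv1 i : sigma_inv i 1 = 1.
Proof. by rewrite -{1}(sigma1 i) sigmaK ?rpred1. Qed.

Lemma Sunit_sigma_inv i u : Sunit u -> Sunit (sigma_inv i u).
Proof.
move=> [uS [u' u'S [uu' u'u]]]; split; first exact: sigma_invS.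
by exists (sigma_inv i u'); rewrite ?sigma_invS // -!sigma_invM // uu' u'u sigma_inv1.
Qed.

Lemma wprod_mulr_lead w r : r \in S -> r != 0 -> exists r',
  [/\ r' \in S, r' != 0 & deglt (size w) (wprod x w * r - r' * wprod x w)].
Proof.
move=> rS r0; elim: w => [|i w [r' [r'S r'0 d_w]]].
  by exists r; split => //; rewrite wprod_nil mulr1 mul1r subrr; apply: deglt0.
exists (sigma i r'); split; first exact: sigmaS.
  apply: contra_neq r'0 => e; apply: (@sigma_inj i) => //; first exact: rpred0.
  by rewrite e sigma0.
set b := wprod x w * r - r' * wprod x w.
have -> : wprod x (i :: w) * r =
    x i * b + delta i r' * wprod x w + sigma i r' * wprod x (i :: w).
  rewrite wprod_cons -mulrA -(subrK (r' * wprod x w) (wprod x w * r)) -/b mulrDr -addrA.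
  by congr (_ + _); rewrite mulrA mulXr // mulrDl addrC mulrA.
rewrite addrK; apply: degltD; first exact: degltXl.
by apply: degltMl; [exact: deltaS | exact: deglt_wprod].
Qed.

Lemma wprod_mulr_surj w c : c \in S ->
  exists2 r, r \in S & deglt (size w) (wprod x w * r - c * wprod x w).
Proof.
elim: w c => [|i w IH] c cS.
  by exists c => //; rewrite wprod_nil mulr1 mul1r subrr; apply: deglt0.
have [r rS d_w] := IH _ (sigma_invS i cS); exists r => //.
set b := wprod x w * r - sigma_inv i c * wprod x w.
have -> : wprod x (i :: w) * r =
    x i * b + delta i (sigma_inv i c) * wprod x w + c * wprod x (i :: w).
  rewrite wprod_cons -mulrA -(subrK (sigma_inv i c * wprod x w) (wprod x w * r)) -/b.
  rewrite mulrDr -addrA; congr (_ + _).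
  by rewrite mulrA mulXr ?sigma_invS // sigma_invK // mulrDl addrC mulrA.
rewrite addrK; apply: degltD; first exact: degltXl.
by apply: degltMl; [exact: deltaS (sigma_invS i cS) | exact: deglt_wprod].
Qed.

Lemma rev_wprod_lead w : standard w ->
  exists u, Sunit u /\ deglt (size w) (wprod x (rev w) - u * wprod x w).
Proof.
move=> std_w; have [t [u [std_t pt uU d_w]]] := wprod_lead (rev w).
have tw : t = w.
  by apply: standard_perm_eq std_t std_w _; rewrite (perm_trans pt) ?perm_rev.
by exists u; split => //; move: d_w; rewrite size_rev tw.
Qed.

Lemma rev_wprod_mulr_lead w r : standard w -> r \in S -> exists v, [/\ v \in S,
  v = 0 -> r = 0 & deglt (size w) (wprod x (rev w) * r - v * wprod x w)].
Proof.
move=> std_w rS; have [-> | r0] := eqVneq r 0.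
  by exists 0; split; rewrite ?rpred0 // mulr0 mul0r subrr; apply: deglt0.
have [r' [r'S r'0 d_r]] := wprod_mulr_lead (rev w) rS r0.
have [u [[uS [u' u'S [uu' _]]] d_u]] := rev_wprod_lead std_w.
exists (r' * u); split; first exact: rpredM.
  by move=> r'u0; case/eqP: r'0; rewrite -[r']mulr1 -uu' mulrA r'u0 mul0r.
have -> : wprod x (rev w) * r - r' * u * wprod x w =
    (wprod x (rev w) * r - r' * wprod x (rev w))
    + r' * (wprod x (rev w) - u * wprod x w).
  by rewrite mulrBr addrA subrK mulrA.
by apply: degltD; [rewrite -(size_rev w) | exact: degltMl].
Qed.

Lemma rev_wprod_mulr_surj w c : standard w -> c \in S ->
  exists2 r, r \in S & deglt (size w) (c * wprod x w - wprod x (rev w) * r).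
Proof.
move=> std_w cS; have [u [[uS [u' u'S [_ u'u]]] d_u]] := rev_wprod_lead std_w.
have [r rS d_r] := wprod_mulr_surj (rev w) (rpredM cS u'S); exists r => //.
have -> : c * wprod x w - wprod x (rev w) * r =
    - (c * u' * (wprod x (rev w) - u * wprod x w))
    - (wprod x (rev w) * r - c * u' * wprod x (rev w)).
  by rewrite mulrBr opprB -!mulrA (mulrA u') u'u mul1r opprB addrA subrK.
apply: degltB; first by apply/degltN/degltMl => //; apply: rpredM.
by rewrite -(size_rev w).
Qed.

Lemma deglt_rev_wprod_mulr w r : standard w -> r \in S ->
  deglt (size w).+1 (wprod x (rev w) * r).
Proof.
move=> std_w rS; have [v [vS _ d_w]] := rev_wprod_mulr_lead std_w rS.
rewrite -(subrK (v * wprod x w) (_ * r)); apply: degltD; first exact: deglt_leq d_w.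
exact: deglt_monom.
Qed.

Definition rcombo (L : seq (A * seq 'I_n)) := \sum_(p <- L) wprod x (rev p.2) * p.1.

Lemma deglt_rcombo_top d a : deglt d.+1 a -> exists L b,
  [/\ all (fun p => (p.1 \in S) && standard p.2) L, deglt d b & a = rcombo L + b].
Proof.
case=> l + ->; elim: l => [|[r w] l IH] /=.
  exists [::], 0; split => //; first exact: deglt0.
  by rewrite /lcombo /rcombo !big_nil addr0.
move=> /andP[/and3P[/= rS std_w lt_wd] /IH[L [b [ok_L d_b e_l]]]].
rewrite /lcombo big_cons -/(lcombo l) e_l /=.
have [lt_wd' | le_dw] := ltnP (size w) d.
  exists L, (r * wprod x w + b); split => //; last by rewrite addrCA.
  by apply: degltD => //; apply: deglt_leq lt_wd' (deglt_monom rS std_w).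
have size_w : size w = d by apply/eqP; rewrite eqn_leq le_dw andbT -ltnS.
have [r2 r2S d_r] := rev_wprod_mulr_surj std_w rS.
exists ((r2, w) :: L), (r * wprod x w - wprod x (rev w) * r2 + b); split.
- by rewrite /= r2S std_w ok_L.
- by apply: degltD => //; rewrite -size_w.
rewrite /rcombo big_cons -/(rcombo L) /= addrACA.
by rewrite [wprod x (rev w) * r2 + _]addrC subrK.
Qed.

Lemma deglt_rcombo d a : deglt d a ->
  exists2 L, all (fun p => (p.1 \in S) && standard p.2) L & a = rcombo L.
Proof.
elim: d a => [|d IH] a d_a.
  by exists [::]; rewrite ?(deglt0_eq0 d_a) /rcombo ?big_nil.
have [L [b [ok_L /IH[L' ok_L' ->] ->]]] := deglt_rcombo_top d_a.
by exists (L ++ L'); rewrite ?all_cat ?ok_L // /rcombo big_cat.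
Qed.

Lemma deglt_coef_eq0 D (s : seq (n.-tuple nat)) (c : n.-tuple nat -> A) :
  uniq s -> (forall al, c al \in S) ->
  deglt D (\sum_(al <- s) c al * wprod x (mon_word al)) ->
  forall al, al \in s -> size (mon_word al) = D -> c al = 0.
Proof.
move=> uniq_s cS [l ok_l e] al al_s size_al.
pose l' := [seq (c be, mon_word be) | be <- s] ++ [seq (- p.1, p.2) | p <- l].
have ok_l' : all (fun p => (p.1 \in S) && standard p.2) l'.
  rewrite all_cat !all_map; apply/andP; split; apply/allP => p pl /=.
    by rewrite cS mon_word_standard.
  by have /and3P[p1S std_p _] := allP ok_l p pl; rewrite rpredN p1S.
have l'0 : lcombo l' = 0.
  rewrite /lcombo big_cat !big_map /= e /lcombo -big_split /= big1 // => p _.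
  by rewrite mulNr addrN.
have := lcombo_coef_eq0 ok_l' l'0 (mon_word_standard al).
rewrite big_cat !big_map /= [X in X + _](eq_bigl (pred1 al)) => [|be]; last first.
  by rewrite /= (inj_eq (@mon_word_inj n)).
rewrite -big_filter filter_pred1_uniq // big_seq1 big_seq_cond big1 ?addr0 //.
move=> p /andP[pl /eqP e_p]; have /and3P[_ _] := allP ok_l p pl.
by rewrite e_p size_al ltnn.
Qed.

(* Modulo degree D the sum reduces to the sum of the v_be x^be over the be of
   degree D, where v_be x^be is the leading term of x_n^{b_n} ... x_1^{b_1} c_be;
   left freeness kills the v_be, hence the c_be. *)
Lemma rev_monom_top_coef D (s : seq (n.-tuple nat)) (c : n.-tuple nat -> A) :
  uniq s -> (forall al, c al \in S) ->
  \sum_(al <- s) wprod x (rev (mon_word al)) * c al = 0 ->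
  (forall be, be \in s -> (D < size (mon_word be))%N -> c be = 0) ->
  forall al, al \in s -> size (mon_word al) = D -> c al = 0.
Proof.
move=> uniq_s cS s0 c_gt al al_s size_al.
have [v vP] := functional_choice (fun be v => [/\ v \in S, v = 0 -> c be = 0 &
  deglt (size (mon_word be))
    (wprod x (rev (mon_word be)) * c be - v * wprod x (mon_word be))])
  (fun be => rev_wprod_mulr_lead (mon_word_standard be) (cS be)).
pose v' be := if size (mon_word be) == D then v be else 0.
have v'S be : v' be \in S.
  by rewrite /v'; case: ifP => _; [case: (vP be) | exact: rpred0].
suff /(deglt_coef_eq0 uniq_s v'S)/(_ al al_s size_al) :
    deglt D (\sum_(be <- s) v' be * wprod x (mon_word be)).
  by rewrite /v' size_al eqxx; case: (vP al) => _ + _; apply.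
have -> : \sum_(be <- s) v' be * wprod x (mon_word be) = - \sum_(be <- s)
    (wprod x (rev (mon_word be)) * c be - v' be * wprod x (mon_word be)).
  by rewrite sumrB s0 sub0r opprK.
apply/degltN/deglt_sum => be be_s; rewrite /v'.
case: ltngtP => [lt_be | gt_be | <-]; last by case: (vP be).
- rewrite mul0r subr0; apply: deglt_leq lt_be _.
  exact: deglt_rev_wprod_mulr (mon_word_standard be) (cS be).
- by rewrite c_gt // mulr0 mul0r subrr; apply: deglt0.
Qed.

Lemma rev_monom_free (s : seq (n.-tuple nat)) (c : n.-tuple nat -> A) :
  uniq s -> (forall al, c al \in S) ->
  \sum_(al <- s) wprod x (rev (mon_word al)) * c al = 0 ->
  forall al, al \in s -> c al = 0.
Proof.
move=> uniq_s cS s0; pose M := \sum_(be <- s) (size (mon_word be)).+1.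
have lt_M be : be \in s -> (size (mon_word be) < M)%N.
  by move=> be_s; rewrite /M (bigD1_seq be) //= leq_addr.
suff c0 k al : al \in s -> (M <= size (mon_word al) + k)%N -> c al = 0.
  by move=> al al_s; apply: (c0 M) => //; rewrite leq_addl.
elim: k al => [|k IH] al al_s le_M.
  by move: (lt_M al al_s); rewrite ltnNge -(addn0 (size _)) le_M.
have [|gt_M] := leqP M (size (mon_word al) + k); first exact: IH.
apply: (rev_monom_top_coef uniq_s cS s0) => // be be_s lt_be; apply: IH => //.
by apply: leq_trans le_M _; rewrite addnS -addSn leq_add2r.
Qed.

Lemma sigma_inv_neq0 i r : r \in S -> r != 0 -> sigma_inv i r != 0.
Proof. by move=> rS; apply: contra_neq => e; rewrite -(sigma_invK i rS) e sigma0. Qed.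

Lemma in_linD a b : in_lin S x a -> in_lin S x b -> in_lin S x (a + b).
Proof.
move=> [r0 [r [r0S [rS ->]]]] [r0' [r' [r0'S [r'S ->]]]].
exists (r0 + r0'), (fun k => r k + r' k); split; first exact: rpredD.
split=> [k | ]; first exact: rpredD.
by rewrite addrACA -big_split; congr (_ + _); apply: eq_bigr => k _; rewrite mulrDl.
Qed.

Lemma in_linMl r a : r \in S -> in_lin S x a -> in_lin S x (r * a).
Proof.
move=> rS [r0 [rk [r0S [rkS ->]]]].
exists (r * r0), (fun k => r * rk k); split; first exact: rpredM.
split=> [k | ]; first exact: rpredM.
by rewrite mulrDr mulr_sumr; congr (_ + _); apply: eq_bigr => k _; rewrite mulrA.
Qed.

Lemma in_linN a : in_lin S x a -> in_lin S x (- a).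
Proof. by rewrite -mulN1r; apply: in_linMl; rewrite rpredN rpred1. Qed.

Lemma in_linB a b : in_lin S x a -> in_lin S x b -> in_lin S x (a - b).
Proof. by move=> la /in_linN; apply: in_linD. Qed.

Lemma in_lin_const r : r \in S -> in_lin S x r.
Proof.
move=> rS; exists r, (fun _ => 0); split=> //; split=> [k | ]; first exact: rpred0.
by rewrite big1 ?addr0 // => k _; rewrite mul0r.
Qed.

Lemma in_lin_mulX r k : r \in S -> in_lin S x (r * x k).
Proof.
move=> rS; exists 0, (fun j => if j == k then r else 0); split; first exact: rpred0.
split=> [j | ]; first by case: ifP => _; rewrite ?rpred0.
rewrite add0r (bigD1 k) //= eqxx big1 ?addr0 // => j /negbTE ->.
by rewrite mul0r.
Qed.

Lemma in_lin_conv a : in_lin S x a -> in_lin (A := A^c) S x a.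
Proof.
move=> [r0 [r [r0S [rS ->]]]].
exists (r0 - \sum_(k < n) delta k (sigma_inv k (r k))), (fun k => sigma_inv k (r k)).
split; first by rewrite rpredB // rpred_sum // => k _; rewrite deltaS ?sigma_invS.
split=> [k | ]; first exact: sigma_invS.
change (r0 + \sum_(k < n) r k * x k =
  r0 - \sum_(k < n) delta k (sigma_inv k (r k)) + \sum_(k < n) x k * sigma_inv k (r k)).
rewrite -addrA; congr (_ + _); rewrite addrC -sumrB; apply: eq_bigr => k _.
by rewrite mulXr ?sigma_invS // sigma_invK // addrK.
Qed.

Lemma mulX_swap i j a : a \in S -> exists2 R, in_lin S x R &
  x j * (x i * sigma_inv i (sigma_inv j a)) = a * (x j * x i) + R.
Proof.
move=> aS; set b := sigma_inv j a; set c := sigma_inv i b.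
have bS : b \in S := sigma_invS j aS; have cS : c \in S := sigma_invS i bS.
exists (delta j b * x i + (sigma j (delta i c) * x j + delta j (delta i c))).
  apply: in_linD; first by apply: in_lin_mulX; apply: deltaS.
  by apply: in_linD; [apply: in_lin_mulX | apply: in_lin_const]; rewrite ?sigmaS ?deltaS.
rewrite (mulXr i cS) (sigma_invK i bS) mulrDr mulrA (mulXr j bS) (sigma_invK j aS).
by rewrite (mulXr j (deltaS i cS)) mulrDl -!addrA -mulrA.
Qed.

Hypothesis x_spans : mon_spans S x.
Hypothesis x_comm : forall i j : 'I_n,
  exists c, [/\ c \in S, c != 0 & in_lin S x (x j * x i - c * x i * x j)].

Lemma conv_subring : subring_closed (R := A^c) S.
Proof.
split=> [|a b aS bS|a b aS bS]; first exact: rpred1.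
  exact: rpredB.
exact: rpredM bS aS.
Qed.

Lemma conv_mon_spans : mon_spans (A := A^c) S x.
Proof.
move=> a; have [s [c [cS ->]]] := x_spans a.
have : deglt (\sum_(al <- s) (size (mon_word al)).+1)
             (\sum_(al <- s) c al * monom x al).
  apply: deglt_sum => al al_s; rewrite monomE.
  apply: deglt_leq (deglt_monom (cS al) (mon_word_standard al)).
  by rewrite (big_rem al) ?leq_addr.
case/deglt_rcombo => L ok_L ->.
exists (undup [seq mon_exp p.2 | p <- L]).
exists (fun al => \sum_(p <- L | mon_exp p.2 == al) p.1).
split=> [al | ].
  by rewrite big_seq_cond; apply: rpred_sum => p /andP[/(allP ok_L) /andP[]].
rewrite -(standard_sum_monom (x : 'I_n -> A^c)); last first.
  by apply/allP => p /(allP ok_L) /andP[].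
by apply: eq_bigr => p _; rewrite wprod_conv.
Qed.

Lemma conv_mon_free : mon_free (A := A^c) S x.
Proof.
move=> s c uniq_s cS s0; apply: rev_monom_free uniq_s cS _.
by rewrite -[RHS]s0; apply: eq_bigr => al _; rewrite monomE wprod_conv.
Qed.

Lemma conv_mulX i r : r \in S -> r != 0 -> exists c : A^c,
  [/\ c \in S, c != 0 & (x i : A^c) * r - c * x i \in S].
Proof.
move=> rS r0; exists (sigma_inv i r); split; rewrite ?sigma_invS ?sigma_inv_neq0 //.
change (r * x i - x i * sigma_inv i r \in S).
rewrite mulXr ?sigma_invS // sigma_invK // opprD addrA subrr sub0r rpredN.
by rewrite deltaS ?sigma_invS.
Qed.

Lemma conv_comm (i j : 'I_n) : exists c : A^c,
  [/\ c \in S, c != 0 & in_lin (A := A^c) S x ((x j : A^c) * x i - c * x i * x j)].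
Proof.
have [c [cS c0 lin_c]] := x_comm j i.
exists (sigma_inv i (sigma_inv j c)); split; first by rewrite !sigma_invS.
  by apply/sigma_inv_neq0/sigma_inv_neq0; rewrite ?sigma_invS.
apply: in_lin_conv.
change (in_lin S x (x i * x j - x j * (x i * sigma_inv i (sigma_inv j c)))).
have [R lin_R ->] := mulX_swap i j cS.
have -> : x i * x j - (c * (x j * x i) + R) = x i * x j - c * x j * x i - R.
  by rewrite opprD addrA mulrA.
exact: in_linB.
Qed.

Lemma conv_comm_unit (i j : 'I_n) : (i < j)%N -> exists c : A^c, [/\ c \in S,
  unit_in_S (A := A^c) S c & in_lin (A := A^c) S x ((x j : A^c) * x i - c * x i * x j)].
Proof.
move=> lt_ij; have [c [cS [d dS [cd dc]] lin_c]] := x_comm_unit lt_ij.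
have dU : Sunit d by split=> //; exists c.
exists (sigma_inv i (sigma_inv j d)); split; first by rewrite !sigma_invS.
  have [_ [e eS [e1 e2]]] := Sunit_sigma_inv i (Sunit_sigma_inv j dU).
  by exists e.
apply: in_lin_conv.
change (in_lin S x (x i * x j - x j * (x i * sigma_inv i (sigma_inv j d)))).
have [R lin_R ->] := mulX_swap i j dS.
have -> : x i * x j - (d * (x j * x i) + R) = - (d * (x j * x i - c * x i * x j)) - R.
  by rewrite opprD addrA mulrBr !mulrA dc mul1r opprB.
by apply: in_linB lin_R; apply/in_linN/in_linMl.
Qed.

Lemma conv_sigma_bijective i : exists sigma' delta' : A^c -> A^c,
  assoc_maps (A := A^c) S x i sigma' delta' /\ bijective_on_S (A := A^c) S sigma'.
Proof.
exists (sigma_inv i), (fun r => - delta i (sigma_inv i r)); split.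
  by apply: assoc_maps_conv; [exact: S_subring | exact: x_assoc | exact: sigma_invP].
split=> [a b aS bS e | r rS]; first by rewrite -(sigma_invK i aS) e sigma_invK.
by exists (sigma i r); rewrite ?sigmaS ?sigmaK.
Qed.

Lemma conv_bijective_skewPBW : bijective_skewPBW (A := A^c) S x.
Proof.
split; [split | exact: conv_sigma_bijective | exact: conv_comm_unit].
- exact: conv_subring.
- exact: conv_mon_spans.
- exact: conv_mon_free.
- exact: conv_mulX.
- exact: conv_comm.
Qed.

End SkewPBW.

Lemma choose_assoc_maps (A : nzRingType) (S : pred A) n (x : 'I_n -> A) :
  (forall i, exists sigma delta,
     assoc_maps S x i sigma delta /\ bijective_on_S S sigma) ->
  exists sigma delta sigma_inv : 'I_n -> A -> A,
    [/\ forall i, assoc_maps S x i (sigma i) (delta i),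
         forall i, {in S &, injective (sigma i)}
       & forall i r, r \in S -> sigma_inv i r \in S /\ sigma i (sigma_inv i r) = r].
Proof.
move=> x_bij.
have : forall i, exists sd : (A -> A) * (A -> A),
    assoc_maps S x i sd.1 sd.2 /\ bijective_on_S S sd.1.
  by move=> i; have [sg [dl ?]] := x_bij i; exists (sg, dl).
case/functional_choice => sd sdP.
have : forall ir : 'I_n * A, exists r0,
    ir.2 \in S -> r0 \in S /\ (sd ir.1).1 r0 = ir.2.
  move=> [i r] /=; have [_ [_ surj]] := sdP i.
  by have [/surj[r0 ? ?] | _] := boolP (r \in S); [exists r0 | exists r].
case/functional_choice => inv invP.
exists (fun i => (sd i).1), (fun i => (sd i).2), (fun i r => inv (i, r)).
split=> [i | i | i r]; [by case: (sdP i) | by case: (sdP i) => _ [] |].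
exact: (invP (i, r)).
Qed.

Theorem proposition4p1 (A : nzRingType) (S : pred A) (n : nat) (x : 'I_n -> A) :
  bijective_skewPBW S x ->
  bijective_skewPBW (A := A^c) S x /\
  (forall (i : 'I_n) (sigma delta sigma_inv : A -> A),
      assoc_maps S x i sigma delta ->
      (forall r, r \in S -> sigma_inv r \in S /\ sigma (sigma_inv r) = r) ->
      assoc_maps (A := A^c) S x i sigma_inv (fun r => - delta (sigma_inv r))).
Proof.
move=> [[S_subring x_spans x_free _ x_comm] x_bij x_comm_unit].
split=> [|i sigma delta sigma_inv]; last exact: assoc_maps_conv S_subring.
have [sigma [delta [sigma_inv [x_assoc sigma_inj sigma_invP]]]] :=
  choose_assoc_maps x_bij.
exact: (conv_bijective_skewPBW S_subring x_free x_assoc x_comm_unit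
  sigma_inj sigma_invP).
Qed.
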